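(* Let $G$ be a finite simple graph of order $n$, and for $k\in\{0,1,\dots,n\}$ let $c_k$ denote the number of connected sets of $G$ of order $k$. Then \[ 2c_k\leq (n-k+1)c_{k-1} \] for all $k\in\{2,\dots,n\}$. More generally, \[ (k-t+1)c_k\leq \binom{n-t}{k-t}c_t \] for all $k\in\{2,\dots,n\}$ and $t\in\{1,\dots,k-1\}$.
   Context: A subset $C$ of the vertex set of a graph $G$ is a connected set if it is nonempty and the induced subgraph $G[C]$ is connected. The order of a connected set is its cardinality; in particular $c_0=0$. *)

From mathcomp Require Import all_boot.
Set Implicit Arguments. Unset Strict Implicit. Unset Printing Implicit Defensive.

(* A finite simple graph: vertex type T (a finType), adjacency e : rel T,
   required symmetric and irreflexive in the theorem. *)

Definition induced_rel (T : finType) (e : rel T) (C : {set T}) : rel T :=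
  [rel x y | [&& x \in C, y \in C & e x y]].

Definition connected_set (T : finType) (e : rel T) (C : {set T}) : bool :=
  (C != set0) &&
  [forall x in C, forall y in C, connect (induced_rel e C) x y].

(* c_k: number of connected sets of order k (so c_0 = 0). *)
Definition num_connected_sets (T : finType) (e : rel T) (k : nat) : nat :=
  #|[set C : {set T} | connected_set e C && (#|C| == k)]|.

(* Double count the pairs D \subset C of connected sets with #|D| = t and
   #|C| = k.  A t-set D lies in at most 'C(n - t, k - t) sets of order k.
   Conversely, a connected k-set C contains at least k - t + 1 connected
   t-sets: growing a connected set one neighbour at a time yields a connected
   (k-1)-set S inside C, which by induction contains k - t of them, and growing
   a connected t-set inside C from a vertex outside S gives one more. *)

From mathcomp Require Import all_boot zify.

Set Implicit Arguments.
Unset Strict Implicit.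
Unset Printing Implicit Defensive.

Lemma double_counting_leq (I J : finType) (A : {set I}) (B : {set J})
    (R : I -> J -> bool) p q :
  {in A, forall i, p <= #|[set j in B | R i j]|} ->
  {in B, forall j, #|[set i in A | R i j]| <= q} ->
  p * #|A| <= q * #|B|.
Proof.
have card_rel (K : finType) (X : {set K}) (P : pred K) :
    #|[set x in X | P x]| = \sum_(x in X) P x.
  rewrite -sum1_card (eq_bigl (fun x => (x \in X) && P x)) => [|x]; last first.
    by rewrite inE.
  by rewrite big_mkcondr; apply: eq_bigr => x _; case: (P x).
move=> leA leB; rewrite mulnC [q * _]mulnC -!sum_nat_const.
apply: (@leq_trans (\sum_(i in A) \sum_(j in B) R i j)).
  by apply: leq_sum => i iA; rewrite -card_rel leA.
rewrite exchange_big /=; apply: leq_sum => j jB.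
by rewrite -(card_rel _ _ (R^~ j)) leB.
Qed.

Lemma card_supersets (U : finType) (D : {set U}) k :
  #|[set C : {set U} | D \subset C & #|C| == k]| <= 'C(#|U| - #|D|, k - #|D|).
Proof.
rewrite -(cardsC D) addKn -cards_draws.
apply: leq_trans (leq_imset_card (setU D) _); apply: subset_leq_card.
apply/subsetP => C; rewrite inE => /andP[sDC /eqP <-].
have DC : D :|: (C :\: D) = C.
  by rewrite setDE setUIr setUCr setIT (setUidPr sDC).
by rewrite -{1}DC imset_f // inE subsetDr cardsDS ?eqxx.
Qed.

Section ConnectedSets.

Variables (T : finType) (e : rel T).
Hypothesis e_sym : symmetric e.

Lemma connected_setP (C : {set T}) :
  reflect (C != set0 /\ {in C &, forall x y, connect (induced_rel e C) x y})
          (connected_set e C).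
Proof.
apply: (iffP andP) => -[C0 cC]; split=> //.
  by move=> x y xC yC; apply: forall_inP (forall_inP cC x xC) y yC.
by apply/forall_inP => x xC; apply/forall_inP => y yC; apply: cC.
Qed.

Lemma connect_induced_sym (C : {set T}) : connect_sym (induced_rel e C).
Proof.
by apply: sym_connect_sym => x y; rewrite /induced_rel /= e_sym andbCA.
Qed.

Lemma connect_inducedS (S C : {set T}) : S \subset C ->
  subrel (connect (induced_rel e S)) (connect (induced_rel e C)).
Proof.
move=> sSC; apply: connect_sub => x y /and3P[xS yS exy].
by apply: connect1; rewrite /induced_rel /= !(subsetP sSC) ?exy.
Qed.

Lemma connected_set1 x : connected_set e [set x].
Proof.
apply/connected_setP; split; first by apply/set0Pn; exists x; rewrite set11.
by move=> y z /set1P-> /set1P->.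
Qed.

Lemma connected_setU1 (S : {set T}) u v :
  connected_set e S -> u \in S -> e u v -> connected_set e (v |: S).
Proof.
move=> /connected_setP[_ cS] uS euv; apply/connected_setP.
split; first by apply/set0Pn; exists v; rewrite setU11.
have to_u x : x \in v |: S -> connect (induced_rel e (v |: S)) x u.
  case/setU1P => [-> | xS].
    by apply: connect1; rewrite /induced_rel /= setU11 setU1r // e_sym.
  exact: connect_inducedS (subsetUr _ _) _ _ (cS x u xS uS).
move=> x y xS yS; apply: connect_trans (to_u x xS) _.
by rewrite connect_induced_sym to_u.
Qed.

Lemma connected_set_exit_edge (S C : {set T}) :
  connected_set e C -> S != set0 -> S \proper C ->
  exists u v, [/\ u \in S, v \in C :\: S & e u v].
Proof.
move=> /connected_setP[_ cC] /set0Pn[s sS] /properP[sSC [z zC zNS]].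
have [/exists_inP[u uS /exists_inP[v vCS euv]] | noexit] :=
  boolP [exists u in S, exists v in C :\: S, e u v]; first by exists u, v.
have closedS : closed (induced_rel e C) S.
  apply: (intro_closed (@connect_induced_sym C)) => x y /and3P[_ yC exy] xS.
  apply: contraNT noexit => yNS; apply/exists_inP; exists x => //.
  by apply/exists_inP; exists y; rewrite // inE yNS.
have := closed_connect closedS (cC s z (subsetP sSC s sS) zC).
by rewrite sS (negbTE zNS).
Qed.

Lemma connected_set_grow (S C : {set T}) m :
  connected_set e S -> connected_set e C -> S \subset C -> #|S| <= m <= #|C| ->
  exists2 S', connected_set e S' & [/\ S \subset S', S' \subset C & #|S'| = m].
Proof.
move=> cS cC sSC; elim: m => [|m IH] /andP[leSm lemC].
  by exists S => //; split=> //; lia.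
have [eqSm | neSm] := eqVneq #|S| m.+1; first by exists S.
have [S' cS' [sSS' sS'C cardS']] := IH (ltac:(lia)).
have S'0 : S' != set0 by case/connected_setP: cS'.
have ltS'C : S' \proper C by rewrite properEcard sS'C cardS'.
have [u [v [uS' /setDP[vC vNS'] euv]]] := connected_set_exit_edge cC S'0 ltS'C.
exists (v |: S'); first exact: connected_setU1 cS' uS' euv.
split; first exact: subset_trans sSS' (subsetUr _ _).
  by rewrite subUset sub1set vC.
by rewrite cardsU1 vNS' cardS'.
Qed.

Definition connected_sets k := [set C : {set T} | connected_set e C && (#|C| == k)].

Definition connected_subsets (C : {set T}) t :=
  [set D in connected_sets t | D \subset C].

Lemma connected_subsetsS (S C : {set T}) t :
  S \subset C -> connected_subsets S t \subset connected_subsets C t.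
Proof.
move=> sSC; apply/subsetP => D; rewrite !inE => /andP[-> sDS].
exact: subset_trans sDS sSC.
Qed.

Lemma card_connected_subsets (C : {set T}) t :
  connected_set e C -> 0 < t <= #|C| -> #|C| - t < #|connected_subsets C t|.
Proof.
move CE : #|C| => k; elim: k C CE t => [|k IH] C CE t cC /andP[t0 ltk]; first lia.
have [-> | net] := eqVneq t k.+1.
  rewrite subnn card_gt0; apply/set0Pn; exists C.
  by rewrite !inE cC CE eqxx subxx.
have [x xC] : exists x, x \in C by case/connected_setP: cC => /set0Pn.
have [S cS [_ sSC cardS]] :=
  connected_set_grow (m := k) (connected_set1 x) cC
    (ltac:(by rewrite sub1set)) (ltac:(rewrite cards1 CE; lia)).
have /properP[_ [v vC vNS]] : S \proper C by rewrite properEcard sSC CE cardS /=.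
have [D cD [vD sDC cardD]] :=
  connected_set_grow (m := t) (connected_set1 v) cC
    (ltac:(by rewrite sub1set)) (ltac:(rewrite cards1 CE; lia)).
have ltSC : connected_subsets S t \proper connected_subsets C t.
  apply/properP; split; first exact: connected_subsetsS.
  exists D; first by rewrite !inE cD cardD eqxx sDC.
  rewrite inE; apply: contraNN vNS => /andP[_ sDS].
  by apply: (subsetP sDS); rewrite (subsetP vD) ?set11.
have := IH S cardS t cS (ltac:(lia)); have := proper_card ltSC; lia.
Qed.

Lemma num_connected_sets_leq k t : 0 < t <= k ->
  (k - t + 1) * num_connected_sets e k <= 'C(#|T| - t, k - t) * num_connected_sets e t.
Proof.
rewrite /num_connected_sets -!/(connected_sets _) => ltk.
apply: (double_counting_leq (R := fun C D : {set T} => D \subset C)).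
  move=> C; rewrite inE => /andP[cC /eqP cardC]; rewrite addn1 -cardC.
  by apply: card_connected_subsets; rewrite ?cardC.
move=> D; rewrite inE => /andP[_ /eqP <-].
apply: leq_trans (card_supersets D k); apply: subset_leq_card.
by apply/subsetP => C; rewrite !inE => /andP[/andP[_ ->] ->].
Qed.

End ConnectedSets.

Theorem lemma2p2 (T : finType) (e : rel T)
  (e_sym : symmetric e) (e_irr : irreflexive e) :
  let n := #|T| in
  let c := num_connected_sets e in
  (forall k, 2 <= k <= n -> 2 * c k <= (n - k + 1) * c k.-1) /\
  (forall k t, 2 <= k <= n -> 1 <= t <= k - 1 ->
     (k - t + 1) * c k <= 'C(n - t, k - t) * c t).
Proof.
move=> n c; split=> [k kn | k t kn tk]; last first.
  by have := num_connected_sets_leq e_sym (ltac:(lia) : 0 < t <= k).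
have := num_connected_sets_leq e_sym (ltac:(lia) : 0 < k.-1 <= k).
rewrite -/n -/c.
have -> : k - k.-1 = 1 by lia.
by rewrite bin1; have -> : n - k.-1 = n - k + 1 by lia.
Qed.
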